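(* Let $G=\{\cdot\mid *\}$, $H=\{\cdot\mid 1\}$, and $\mathcal{U}=\mathcal{D}(G,H)$. Then $G\not\equiv_\mathcal{U}0$.
   Context: Games are finite partizan games; $*=\{0\mid0\}$, $1=\{0\mid\cdot\}$; $\{\cdot\mid X\}$ denotes the game with no Left option and sole Right option $X$. $o(G)$ is the misère outcome class (ordered $\mathscr{L}>\mathscr{N}>\mathscr{R}$, $\mathscr{L}>\mathscr{P}>\mathscr{R}$). A universe is a set of games closed under options, disjunctive sums, conjugates, and forming $\{\mathscr{G}^L\mid\mathscr{G}^R\}$ from nonempty finite subsets of it; $\mathcal{D}(G,H)$ is the smallest universe containing $G$ and $H$. $G\equiv_\mathcal{U}K$ means $o(G+X)=o(K+X)$ for all $X\in\mathcal{U}$. *)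

From Stdlib Require Import List Bool.
Import ListNotations.

Inductive game : Type := Game : list game -> list game -> game.

Definition left_opts (g : game) : list game := let 'Game l _ := g in l.
Definition right_opts (g : game) : list game := let 'Game _ r := g in r.

Definition zero : game := Game [] [].
Definition star : game := Game [zero] [zero].
Definition one : game := Game [zero] [].

(* Misere play: a player with no move available wins.
   wins g = (Left wins moving first, Right wins moving first). *)
Fixpoint wins (g : game) : bool * bool :=
  match g with
  | Game l r =>
      (match l with
       | [] => true
       | _ => existsb (fun x => negb (snd (wins x))) l
       end,
       match r with
       | [] => true
       | _ => existsb (fun x => negb (fst (wins x))) r
       end)
  end.

Inductive outcome : Type := OutL | OutN | OutP | OutR.

Definition o (g : game) : outcome :=
  match wins g with
  | (true, false) => OutL
  | (true, true) => OutN
  | (false, false) => OutP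
  | (false, true) => OutR
  end.

Fixpoint add (g h : game) {struct g} : game :=
  let fix addg (h : game) : game :=
    match g, h with
    | Game gl gr, Game hl hr =>
        Game (map (fun x => add x h) gl ++ map addg hl)
             (map (fun x => add x h) gr ++ map addg hr)
    end in
  addg h.

Fixpoint conjg (g : game) : game :=
  match g with Game l r => Game (map conjg r) (map conjg l) end.

Definition is_option (x g : game) : Prop :=
  In x (left_opts g) \/ In x (right_opts g).

Definition universe (U : game -> Prop) : Prop :=
  (forall g x, U g -> is_option x g -> U x) /\
  (forall g h, U g -> U h -> U (add g h)) /\
  (forall g, U g -> U (conjg g)) /\
  (forall l r, l <> [] -> r <> [] -> Forall U l -> Forall U r -> U (Game l r)).

Definition D (G H : game) : game -> Prop :=
  fun x => forall U, universe U -> U G -> U H -> U x.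

Definition equiv_mod (U : game -> Prop) (G K : game) : Prop :=
  forall X, U X -> o (add G X) = o (add K X).

(* The Right option 1 of H lies in every universe containing H, and it
   distinguishes G from 0 in misère play: 0 + 1 = 1 is a Right win, while
   G + 1 is a P-position.  Left moving first must play to G, and then
   Right -> *, Left -> 0 leaves Right without a move; Right moving first
   must play to * + 1, Left answers with * + 0, and Right's forced move to 0
   leaves Left without a move. *)
From Stdlib Require Import List.
Import ListNotations.

Lemma D_closed_option (G H g x : game) :
  D G H g -> is_option x g -> D G H x.
Proof.
  intros Dg Hx U HU UG UH.
  apply (proj1 HU g x); [exact (Dg U HU UG UH) | exact Hx].
Qed.

Lemma D_right (G H : game) : D G H H.
Proof. intros U _ _ UH; exact UH. Qed.

Lemma o_zero_add_one : o (add zero one) = OutR.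
Proof. reflexivity. Qed.

Lemma o_add_one_right_star : o (add (Game [] [star]) one) = OutP.
Proof. reflexivity. Qed.

Theorem mainTheorem19 :
  ~ equiv_mod (D (Game nil (cons star nil)) (Game nil (cons one nil)))
      (Game nil (cons star nil)) zero.
Proof.
  intro Heq.
  assert (one_in_U : D (Game [] [star]) (Game [] [one]) one).
  { apply (D_closed_option _ _ (Game [] [one])).
    - apply D_right.
    - right; left; reflexivity. }
  specialize (Heq one one_in_U).
  rewrite o_add_one_right_star, o_zero_add_one in Heq.
  discriminate Heq.
Qed.
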